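(* Let $B$ be a positive integer and $a_1,\dots,a_N$ positive integers with $a_i\le B$ for all $i$. Let $b$ be the minimum number of parts in a partition of $\{1,\dots,N\}$ such that $\sum_{i\in P}a_i\le B$ for every part $P$ (the bin packing optimum). Consider the ring grooming instance with $n=N+1$, $c=B$, and list of traffic demands consisting of $2a_j$ copies of the pair $\{j,n\}$ for each $1\le j\le N$. Then its minimum number of ADMs satisfies $m=b+N$.
   Context: Ring grooming. An instance consists of integers $n\ge 2$ (ring size) and $c\ge 1$ (capacity), and a finite list $L$ of unordered pairs $\{j,k\}$ with $j\ne k$, $j,k\in\{1,\dots,n\}$ (repetitions allowed); these are the traffic demands. Let $d_{jk}=d_{kj}$ be the number of times $\{j,k\}$ occurs in $L$ (the traffic matrix; $d_{jj}=0$). Let $C_n$ be the cycle graph on vertices $1,\dots,n$ in cyclic order, with edges $\{l,l+1\}$ for $1\le l<n$ and $\{n,1\}$. A solution uses some finite number $r$ of ''rings'', each a copy of $C_n$ in which every edge has capacity $c$. A routing specifies, for every ring $i$ and every pair $j<k$, nonnegative integers $t^0_{ijk},t^1_{ijk}$: the amounts of $\{j,k\}$-traffic sent on ring $i$ along each of the two arcs of $C_n$ between $j$ and $k$. It is feasible if $\sum_i (t^0_{ijk}+t^1_{ijk})=d_{jk}$ for all $j<k$, and for every ring $i$ and every edge $e$ of $C_n$ the total traffic routed on ring $i$ along arcs containing $e$ is at most $c$. Ring $i$ needs an ADM (add/drop multiplexer) at vertex $j$ iff some traffic with endpoint $j$ is routed on ring $i$. The cost of a routing is the total number of ADMs, i.e.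 the number of pairs (ring $i$, vertex $j$) at which an ADM is needed. $m=m(n,c,L)$ denotes the minimum cost over all feasible routings. *)

From mathcomp Require Import all_boot.
Set Implicit Arguments. Unset Strict Implicit. Unset Printing Implicit Defensive.

(* Vertices of C_n are 1..n.  Edge l (1 <= l <= n) is {l, l+1}, edge n is {n,1}.
   For a pair j < k, arc "false" (t^0) is the arc j, j+1, ..., k, i.e. it
   contains edges l with j <= l < k; arc "true" (t^1) is the other arc,
   containing exactly the remaining edges. *)

Definition demand (L : seq (nat * nat)) (j k : nat) : nat :=
  count (fun p => (p == (j, k)) || (p == (k, j))) L.

(* A routing on r rings: t i j k s = t^s_{ijk} (only 1 <= j < k <= n and
   i < r are meaningful). *)
Definition routing := nat -> nat -> nat -> bool -> nat.

Definition arc_has_edge (j k l : nat) (s : bool) : bool :=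
  if s then ~~ ((j <= l) && (l < k)) else (j <= l) && (l < k).

Definition load (n : nat) (t : routing) (i l : nat) : nat :=
  \sum_(1 <= j < n.+1) \sum_(j.+1 <= k < n.+1)
     ((if arc_has_edge j k l false then t i j k false else 0) +
      (if arc_has_edge j k l true then t i j k true else 0)).

Definition feasible (n c : nat) (L : seq (nat * nat)) (r : nat) (t : routing) : Prop :=
  (forall j k, 1 <= j -> j < k -> k <= n ->
     \sum_(0 <= i < r) (t i j k false + t i j k true) = demand L j k) /\
  (forall i l, i < r -> 1 <= l -> l <= n -> load n t i l <= c).

Definition needs_adm (n : nat) (t : routing) (i v : nat) : bool :=
  [exists j : 'I_n.+1, exists k : 'I_n.+1,
     [&& 1 <= (j : nat), (j : nat) < k, (v == j) || (v == k)
       & 0 < t i j k false + t i j k true]].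

Definition cost (n r : nat) (t : routing) : nat :=
  \sum_(0 <= i < r) \sum_(1 <= v < n.+1) needs_adm n t i v.

Definition min_ADMs (n c : nat) (L : seq (nat * nat)) (m : nat) : Prop :=
  (exists r (t : routing), feasible n c L r t /\ cost n r t = m) /\
  (forall r (t : routing), feasible n c L r t -> m <= cost n r t).

(* Items are indexed by 'I_N (item j : 'I_N is item j+1 of the paper). *)
Definition binpack_opt (N : nat) (a : 'I_N -> nat) (B b : nat) : Prop :=
  (exists P : {set {set 'I_N}},
     [/\ partition P [set: 'I_N],
         (forall S, S \in P -> \sum_(i in S) a i <= B) & #|P| = b]) /\
  (forall P : {set {set 'I_N}}, partition P [set: 'I_N] ->
     (forall S, S \in P -> \sum_(i in S) a i <= B) -> b <= #|P|).

Definition reduction_list (N : nat) (a : 'I_N -> nat) : seq (nat * nat) :=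
  flatten [seq nseq (2 * a j) ((j : nat).+1, N.+1) | j <- enum 'I_N].

From mathcomp Require Import all_boot zify.
Set Implicit Arguments. Unset Strict Implicit. Unset Printing Implicit Defensive.

(* All traffic runs between an item vertex j and the hub n = N+1, and each arc
   from j to n crosses exactly one of the two ring edges at n, so a ring carries
   at most 2B units in total.  Given a feasible routing, the items whose 2 a_j
   units all travel on one ring weigh at most B per ring and can share a bin;
   every other item appears on two rings and gets a bin of its own.  Counting
   one ADM per (ring, item) incidence plus one hub ADM per used ring gives
   N + b <= m.  Conversely, routing each bin of an optimal packing on its own
   ring, a_j units along each of the two arcs, meets every demand and uses
   |P| + 1 ADMs for a bin P, hence b + N in total. *)

Lemma sum_nat_eq_indicator m n c : \sum_(m <= k < n) (k == c) = (m <= c < n).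
Proof.
rewrite -mem_index_iota -count_uniq_mem ?iota_uniq // -sum1_count [RHS]big_mkcond.
by apply: eq_bigr => k _; rewrite /=; case: eqP.
Qed.

Lemma sum_nat_indicator_mul m n c (g : nat -> nat) : m <= c < n ->
  \sum_(m <= k < n) (k == c) * g k = g c.
Proof.
move=> cmn; rewrite (eq_bigr (fun k => (k == c) * g c)) => [|k _]; last first.
  by case: eqP => [->|].
by rewrite -big_distrl /= sum_nat_eq_indicator cmn mul1n.
Qed.

Lemma sum_bool_card (T : finType) (P : pred T) : \sum_(x : T) P x = #|P|.
Proof.
by rewrite -sum1_card [RHS]big_mkcond; apply: eq_bigr => x _; rewrite unfold_in; case: (P x).
Qed.

Section Spokes.
Variable N : nat.

Definition spoke (f : 'I_N -> nat) (j k : nat) : nat :=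
  \sum_(j' < N) ((j == j'.+1) && (k == N.+1)) * f j'.

Lemma spokeE f (j : 'I_N) : spoke f j.+1 N.+1 = f j.
Proof.
rewrite /spoke (bigD1 j) //= !eqxx mul1n big1 ?addn0 // => j' /negbTE nj'.
by rewrite eqSS (inj_eq val_inj) eq_sym nj'.
Qed.

Lemma spoke_sum r (f : nat -> 'I_N -> nat) j k :
  \sum_(0 <= i < r) spoke (f i) j k = spoke (fun j' => \sum_(0 <= i < r) f i j') j k.
Proof. by rewrite exchange_big; apply: eq_bigr => j' _; rewrite big_distrr. Qed.

Lemma spokeD f g j k :
  spoke f j k + spoke g j k = spoke (fun j' => f j' + g j') j k.
Proof. by rewrite -big_split; apply: eq_bigr => j' _; rewrite mulnDr. Qed.

Lemma spoke_gt0 f j k : 0 < spoke f j k ->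
  exists2 j' : 'I_N, j = j'.+1 /\ k = N.+1 & 0 < f j'.
Proof.
rewrite lt0n sum_nat_eq0 => /forallPn [j' /=].
case: andP => [[/eqP -> /eqP ->]|_]; last by rewrite mul0n.
by rewrite mul1n -lt0n; exists j'.
Qed.

Lemma spoke_total f :
  \sum_(1 <= j < N.+2) \sum_(j.+1 <= k < N.+2) spoke f j k = \sum_(j' < N) f j'.
Proof.
under eq_bigr do rewrite exchange_big /=.
rewrite exchange_big /=; apply: eq_bigr => j' _.
rewrite (eq_bigr (fun j => (j == j'.+1) * \sum_(j.+1 <= k < N.+2) (k == N.+1) * f j')).
  by rewrite sum_nat_indicator_mul ?sum_nat_indicator_mul //; have := ltn_ord j'; lia.
move=> j _; rewrite big_distrr /=; apply: eq_bigr => k _.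
by case: (j == j'.+1); rewrite ?mul0n ?mul1n.
Qed.
End Spokes.

Lemma demand_reduction_list N (a : 'I_N -> nat) j k : j < k ->
  demand (reduction_list a) j k = spoke (fun j' => 2 * a j') j k.
Proof.
move=> jk; rewrite /demand /reduction_list count_flatten sumnE big_map big_map big_enum /=.
apply: eq_bigr => j' _; rewrite count_nseq /= !xpair_eqE; congr (_ * _).
have -> : (j'.+1 == k) && (N.+1 == j) = false.
  by apply/negbTE/andP => [[/eqP E1 /eqP E2]]; have := ltn_ord j'; lia.
by rewrite orbF eq_sym [N.+1 == _]eq_sym.
Qed.

Lemma load_balanced n (t : routing) i l :
    (forall j k, t i j k false = t i j k true) ->
  load n t i l = \sum_(1 <= j < n.+1) \sum_(j.+1 <= k < n.+1) t i j k false.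
Proof.
move=> tE; apply: eq_bigr => j _; apply: eq_bigr => k _.
by rewrite /arc_has_edge -tE; case: (_ && _); rewrite ?addn0.
Qed.

Section SpokeFlow.
Variables (N : nat) (t : routing).

Definition spoke_flow i (j : 'I_N) := t i j.+1 N.+1 false + t i j.+1 N.+1 true.

Lemma load_ge_spokes i l :
  \sum_(j < N) ((if arc_has_edge j.+1 N.+1 l false then t i j.+1 N.+1 false else 0) +
                (if arc_has_edge j.+1 N.+1 l true then t i j.+1 N.+1 true else 0))
  <= load N.+1 t i l.
Proof.
rewrite /load big_nat_recr //= (big_add1 _ _ 0) /= big_mkord.
apply: leq_trans (leq_addr _ _); apply: leq_sum => j _.
rewrite big_nat_recr /=; last by have := ltn_ord j; lia.
exact: leq_addl.
Qed.

(* Every spoke arc crosses exactly one of the two edges at vertex [N.+1]. *)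
Lemma spoke_flow_le_load i :
  \sum_(j < N) spoke_flow i j <= load N.+1 t i N + load N.+1 t i N.+1.
Proof.
rewrite big_split /=; apply: leq_add.
- apply: leq_trans (load_ge_spokes i N); apply: leq_sum => j _.
  by rewrite /arc_has_edge ltn_ord ltnSn /= addn0.
- apply: leq_trans (load_ge_spokes i N.+1); apply: leq_sum => j _.
  by rewrite /arc_has_edge ltnn andbF.
Qed.

Lemma needs_adm_spoke i (j : 'I_N) : 0 < spoke_flow i j ->
  needs_adm N.+1 t i j.+1 && needs_adm N.+1 t i N.+1.
Proof.
move=> flow_j; have adm v : (v == j.+1) || (v == N.+1) -> needs_adm N.+1 t i v.
  move=> v_end; apply/existsP; exists (inord j.+1); apply/existsP; exists (inord N.+1).
  by rewrite !inordK ?ltnS ?ltn_ord ?(ltnW (ltn_ord j)) //=; apply/andP.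
by rewrite !adm ?eqxx ?orbT.
Qed.

Lemma ring_cost_ge_spokes i :
  #|[set j | 0 < spoke_flow i j]| + [exists j, 0 < spoke_flow i j]
  <= \sum_(1 <= v < N.+2) needs_adm N.+1 t i v.
Proof.
rewrite big_nat_recr //= (big_add1 _ _ 0) /= big_mkord cardsE -sum_bool_card.
apply: leq_add.
  apply: leq_sum => j _; rewrite -[eqn _ 0]/(0 < spoke_flow i j).
  by case: ltnP => // /needs_adm_spoke/andP[->].
by case: existsP => // - [j /needs_adm_spoke/andP[_ ->]].
Qed.
End SpokeFlow.

Section LoadsToPacking.
Variables (N r B : nat) (a : 'I_N -> nat) (x : 'I_r -> 'I_N -> nat).
Hypothesis a_gt0 : forall j, 0 < a j.
Hypothesis a_leB : forall j, a j <= B.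
Hypothesis x_col : forall j, \sum_i x i j = 2 * a j.
Hypothesis x_row : forall i, \sum_j x i j <= 2 * B.

Definition rings_of (j : 'I_N) := [set i | 0 < x i j].

(* Items routed on a single ring share the bin of that ring; every other item,
   which pays for an extra ADM, forms a bin of its own. *)
Definition bin_label (j : 'I_N) : option 'I_r + 'I_N :=
  if #|rings_of j| <= 1 then inl [pick i in rings_of j] else inr j.

Lemma rings_of_gt0 j : 0 < #|rings_of j|.
Proof.
have : 0 < \sum_i x i j by rewrite x_col muln_gt0 a_gt0.
rewrite lt0n sum_nat_eq0 => /forallPn [i /=]; rewrite -lt0n => xij.
by apply/card_gt0P; exists i; rewrite inE.
Qed.

Lemma single_ring_flow j i :
  #|rings_of j| <= 1 -> i \in rings_of j -> x i j = 2 * a j.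
Proof.
move=> /card_le1P one_ring ij; rewrite -x_col (bigD1 i) //= big1 ?addn0 // => i' ni'.
apply/eqP; rewrite -leqn0 leqNgt; apply: contra ni' => xi'j.
by have := one_ring i ij i'; rewrite !inE xi'j => <-.
Qed.

Lemma bin_label_fiber L : \sum_(j | bin_label j == L) a j <= B.
Proof.
case: L => [o|j0]; last first.
  rewrite big_mkcond (bigD1 j0) //= big1 ?addn0 => [|j nj]; first by case: ifP.
  rewrite /bin_label; case: (_ <= 1) => //=.
  by case: eqP => // - [jj0]; rewrite jj0 eqxx in nj.
case: o => [i|]; last first.
  rewrite big1 // => j; rewrite /bin_label; case: ifP => // _ /=.
  by case: pickP => // /(_ _) no_ring; have /card_gt0P [i] := rings_of_gt0 j; rewrite no_ring.
rewrite -(leq_pmul2l (isT : 0 < 2)); apply: leq_trans (x_row i).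
rewrite big_distrr /= [X in _ <= X](bigID (fun j => bin_label j == inl (Some i))) /=.
apply: leq_trans (leq_addr _ _); apply: leq_sum => j.
rewrite /bin_label; case: ifP => // one_ring /=; case: pickP => // i' ij /eqP [<-].
by rewrite single_ring_flow.
Qed.

Lemma card_bin_labels :
  #|bin_label @: [set: 'I_N]| <=
  #|[set i | [exists j, 0 < x i j]]| + #|[set j | 1 < #|rings_of j|]|.
Proof.
have sub : bin_label @: [set: 'I_N] \subset
    (inl \o Some) @: [set i | [exists j, 0 < x i j]] :|: inr @: [set j | 1 < #|rings_of j|].
  apply/subsetP => _ /imsetP [j _ ->]; rewrite /bin_label; case: ifPn => [_|].
    case: pickP => [i|no_ring]; last first.
      by have /card_gt0P [i] := rings_of_gt0 j; rewrite no_ring.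
    by rewrite inE => xij; rewrite in_setU imset_f // inE; apply/existsP; exists j.
  by rewrite -ltnNge => many; rewrite in_setU orbC imset_f ?inE.
apply: leq_trans (subset_leq_card sub) _; rewrite cardsU.
by apply: leq_trans (leq_subr _ _) _; apply: leq_add; apply: leq_imset_card.
Qed.

Lemma packing_from_loads : exists P : {set {set 'I_N}},
  [/\ partition P [set: 'I_N], forall S, S \in P -> \sum_(j in S) a j <= B &
      N + #|P| <= \sum_i (#|[set j | 0 < x i j]| + [exists j, 0 < x i j])].
Proof.
exists (preim_partition bin_label [set: 'I_N]); split.
- exact: preim_partitionP.
- move=> _ /imsetP [j0 _ ->].
  rewrite (eq_bigl (fun j => bin_label j == bin_label j0)) ?bin_label_fiber // => j.
  by rewrite !inE eq_sym.
have -> : preim_partition bin_label [set: 'I_N] =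
          (fun L => [set j | L == bin_label j]) @: (bin_label @: [set: 'I_N]).
  by rewrite -imset_comp; apply: eq_imset => j; apply/setP => j'; rewrite !inE.
apply: leq_trans (leq_add (leqnn N) (leq_trans (leq_imset_card _ _) card_bin_labels)) _.
have count_rings : \sum_i #|[set j | 0 < x i j]| = \sum_j #|rings_of j|.
  under eq_bigr do rewrite cardsE -sum_bool_card.
  by rewrite exchange_big; apply: eq_bigr => j _; rewrite cardsE -sum_bool_card.
rewrite big_split /= count_rings addnA addnAC.
rewrite !cardsE -!sum_bool_card leq_add2r.
apply: (@leq_trans (\sum_j (1 + (1 < #|rings_of j|)))).
  by rewrite big_split /= sum1_card card_ord.
by apply: leq_sum => j _; have := rings_of_gt0 j; case: #|rings_of j| => [|[|c]].
Qed.
End LoadsToPacking.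

Lemma feasible_cost_ge_packing N B (a : 'I_N -> nat) r (t : routing) :
    (forall j, 0 < a j /\ a j <= B) -> feasible N.+1 B (reduction_list a) r t ->
  exists P : {set {set 'I_N}},
    [/\ partition P [set: 'I_N], forall S, S \in P -> \sum_(j in S) a j <= B &
        N + #|P| <= cost N.+1 r t].
Proof.
move=> a_bounds [t_demand t_capacity].
pose x (i : 'I_r) (j : 'I_N) := spoke_flow t i j.
have x_col j : \sum_i x i j = 2 * a j.
  have := t_demand j.+1 N.+1 isT (ltn_ord j) (leqnn _).
  by rewrite big_mkord demand_reduction_list ?ltnS ?ltn_ord // spokeE.
have x_row i : \sum_j x i j <= 2 * B.
  have [N0|N_gt0] := posnP N; first by rewrite big1 // => j; have := ltn_ord j; lia.
  rewrite mul2n -addnn; apply: leq_trans (spoke_flow_le_load _ _ _) _.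
  by apply: leq_add; apply: t_capacity.
have [P [partP binsP countP]] :=
  packing_from_loads (fun j => proj1 (a_bounds j)) (fun j => proj2 (a_bounds j)) x_col x_row.
exists P; split => //; apply: leq_trans countP _.
by rewrite /cost big_mkord; apply: leq_sum => i _; apply: ring_cost_ge_spokes.
Qed.

Lemma sum_enum_nth (T : finType) (P : {set {set T}}) (F : {set T} -> nat) :
  \sum_(0 <= i < #|P|) F (nth set0 (enum P) i) = \sum_(A in P) F A.
Proof. by rewrite -big_enum (big_nth set0) cardE. Qed.

Lemma partition_cover_sum (T : finType) (P : {set {set T}}) (D : {set T}) j :
  partition P D -> j \in D -> \sum_(A in P) (j \in A) = 1.
Proof.
case/and3P => /eqP coverP trivP _ jD; have jP : j \in cover P by rewrite coverP.
rewrite (bigD1 (pblock P j)) ?pblock_mem //= mem_pblock jP big1 // => A /andP [AP nA].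
by apply/eqP; rewrite eqb0; apply: contra nA => jA; rewrite (def_pblock trivP AP jA).
Qed.

Section BinRouting.
Variables (N : nat) (a : 'I_N -> nat) (S : nat -> {set 'I_N}).

Definition bin_routing : routing :=
  fun i j k _ => spoke (fun j' => a j' * (j' \in S i)) j k.

Lemma bin_routing_demand r j k :
    (forall j', \sum_(0 <= i < r) (j' \in S i) = 1) -> j < k ->
  \sum_(0 <= i < r) (bin_routing i j k false + bin_routing i j k true) =
  demand (reduction_list a) j k.
Proof.
move=> cover jk; rewrite demand_reduction_list // big_split /= !spoke_sum spokeD.
by apply: eq_bigr => j' _; rewrite -big_distrr /= cover muln1 addnn -mul2n.
Qed.

Lemma bin_routing_load i l : load N.+1 bin_routing i l = \sum_(j in S i) a j.
Proof.
rewrite load_balanced // spoke_total [RHS]big_mkcond.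
by apply: eq_bigr => j _; case: (j \in S i); rewrite ?muln1 ?muln0.
Qed.

Lemma bin_ring_cost i :
  \sum_(1 <= v < N.+2) needs_adm N.+1 bin_routing i v <= #|S i| + 1.
Proof.
rewrite big_nat_recr //= (big_add1 _ _ 0) /= big_mkord leq_add ?leq_b1 //.
rewrite -sum1_card [X in _ <= X]big_mkcond /=; apply: leq_sum => v _.
case/boolP: (needs_adm _ _ _ _) => // /existsP [j /existsP [k /and4P [_ _ v_end]]].
rewrite addnn double_gt0 => /spoke_gt0 [j' [jE kE]].
rewrite muln_gt0 lt0b => /andP [_ j'_in].
have v_j' : v = j'.
  apply: val_inj; move: v_end; rewrite jE kE !eqSS => /orP [/eqP //|/eqP v_N].
  by have := ltn_ord v; lia.
by rewrite v_j' j'_in.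
Qed.
End BinRouting.

Theorem mainTheorem2 (B N : nat) (a : 'I_N -> nat) (b : nat) :
  0 < B ->
  (forall i, 0 < a i /\ a i <= B) ->
  binpack_opt a B b ->
  min_ADMs N.+1 B (reduction_list a) (b + N).
Proof.
move=> _ a_bounds [[P [partP binsP <-]] P_min].
have lower r t : feasible N.+1 B (reduction_list a) r t -> #|P| + N <= cost N.+1 r t.
  move=> /(feasible_cost_ge_packing a_bounds) [Q [partQ binsQ countQ]].
  by rewrite addnC; apply: leq_trans countQ; rewrite leq_add2l P_min.
split=> //.
pose S i := nth set0 (enum P) i.
have cover j : \sum_(0 <= i < #|P|) (j \in S i) = 1.
  rewrite (sum_enum_nth P (fun A => nat_of_bool (j \in A))).
  by rewrite (partition_cover_sum partP) ?inE.
have feas : feasible N.+1 B (reduction_list a) #|P| (bin_routing a S).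
  split=> [j k _ jk _|i l iP _ _]; first exact: bin_routing_demand.
  by rewrite bin_routing_load; apply: binsP; rewrite -mem_enum mem_nth // -cardE.
exists #|P|, (bin_routing a S); split=> //; apply/eqP; rewrite eqn_leq lower // andbT.
apply: (@leq_trans (\sum_(0 <= i < #|P|) (#|S i| + 1))).
  by apply: leq_sum => i _; apply: bin_ring_cost.
rewrite (sum_enum_nth P (fun A => #|A| + 1)) big_split /=.
by rewrite -(card_partition partP) cardsT card_ord sum1_card addnC.
Qed.
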